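(* Let $T\in\mathcal{KC}(V)$ and $s,p\in\rho_S(T)$ with $s\notin[p]$. Then $$Q_{c,s}^{-1}(T)S_L^{-1}(p,s)+S_R^{-1}(s,p)Q_{c,p}^{-1}(T)=Q_{c,s}^{-1}(T)S_L^{-1}(p,T)+S_R^{-1}(s,\overline{T})Q_{c,p}^{-1}(T)=Q_{c,s}^{-1}(T)S_L^{-1}(p,\overline{T})+S_R^{-1}(s,T)Q_{c,p}^{-1}(T).$$
   Context: $\mathbb{H}$: quaternions $s=s_0+s_1e_1+s_2e_2+s_3e_3$ with $e_1^2=e_2^2=e_3^2=-1$, $e_1e_2=-e_2e_1=e_3$, $e_2e_3=-e_3e_2=e_1$, $e_3e_1=-e_1e_3=e_2$; $\overline{s}=s_0-s_1e_1-s_2e_2-s_3e_3$, $|s|$ Euclidean norm, $\mathbb{S}=\{s:s_0=0,|s|=1\}$, and $[p]=\{p_0+J|p-p_0|:J\in\mathbb{S}\}$. For quaternions $s,p$ with $s\notin[p]$, the Cauchy kernels are $S_L^{-1}(p,s):=(p-\overline{s})(p^2-2s_0p+|s|^2)^{-1}$ and $S_R^{-1}(s,p):=(s^2-2p_0s+|p|^2)^{-1}(s-\overline{p})$. $V$ is a two-sided Banach space over $\mathbb{H}$, $\mathcal{I}$ the identity. $\mathcal{KC}(V)$: closed right-linear operators $T$ with two-sided linear domain, $T=T_0+e_1T_1+e_2T_2+e_3T_3$ with two-sided linear $T_i$, $\operatorname{dom}(T_i)=\operatorname{dom}(T)$, $\operatorname{dom}(T^2)\subseteq\operatorname{dom}(T_iT_j)$,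 $T_iT_j=T_jT_i$ on $\operatorname{dom}(T^2)$. $\overline{T}:=T_0-e_1T_1-e_2T_2-e_3T_3\in\mathcal{KC}(V)$ (with components $T_0,-T_1,-T_2,-T_3$), $|T|^2:=\sum_iT_i^2$, $Q_{c,s}(T):=s^2\mathcal{I}-2sT_0+|T|^2$ on $\operatorname{dom}(T^2)$ (note $Q_{c,s}(\overline{T})=Q_{c,s}(T)$). $\rho_S(T)$: the $s\in\mathbb{H}$ with $Q_{c,s}(T):\operatorname{dom}(T^2)\to V$ bijective, $Q_{c,s}^{-1}(T)$ the inverse. For $s\in\rho_S(T)$ and an operator $A\in\{T,\overline{T}\}$ with components $A_0,\dots,A_3$: $S_L^{-1}(s,A):=(s\mathcal{I}-\overline{A})Q_{c,s}^{-1}(T)$ and $S_R^{-1}(s,A):=sQ_{c,s}^{-1}(T)-\sum_{i=0}^3A_iQ_{c,s}^{-1}(T)\overline{e_i}$ (with $e_0=1$, $\overline{\overline{T}}=T$). *)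

From HB Require Import structures.
From mathcomp Require Import all_boot all_order all_algebra.
From mathcomp Require Import all_classical all_reals all_analysis.
Set Implicit Arguments. Unset Strict Implicit. Unset Printing Implicit Defensive.
Import Order.TTheory GRing.Theory Num.Theory.
Local Open Scope ring_scope.
Local Open Scope classical_set_scope.

Record quat (R : realType) := Quat { q0 : R; q1 : R; q2 : R; q3 : R }.

Section Quat.
Variable R : realType.
Implicit Types a b s p : quat R.

Definition qreal (r : R) : quat R := Quat r 0 0 0.
Definition q1H : quat R := qreal 1.
Definition qe1 : quat R := Quat 0 1 0 0.
Definition qe2 : quat R := Quat 0 0 1 0.
Definition qe3 : quat R := Quat 0 0 0 1.
Definition qadd a b := Quat (q0 a + q0 b) (q1 a + q1 b) (q2 a + q2 b) (q3 a + q3 b).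
Definition qopp a := Quat (- q0 a) (- q1 a) (- q2 a) (- q3 a).
Definition qsub a b := qadd a (qopp b).
(* Hamilton product: e1^2=e2^2=e3^2=-1, e1e2=e3, e2e3=e1, e3e1=e2 *)
Definition qmul a b :=
  Quat (q0 a * q0 b - q1 a * q1 b - q2 a * q2 b - q3 a * q3 b)
       (q0 a * q1 b + q1 a * q0 b + q2 a * q3 b - q3 a * q2 b)
       (q0 a * q2 b - q1 a * q3 b + q2 a * q0 b + q3 a * q1 b)
       (q0 a * q3 b + q1 a * q2 b - q2 a * q1 b + q3 a * q0 b).
Definition qconj a := Quat (q0 a) (- q1 a) (- q2 a) (- q3 a).
Definition qnorm a := Num.sqrt (q0 a ^+ 2 + q1 a ^+ 2 + q2 a ^+ 2 + q3 a ^+ 2).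
Definition qscale (r : R) a := Quat (r * q0 a) (r * q1 a) (r * q2 a) (r * q3 a).
Definition qinv a := qscale ((qnorm a ^+ 2)^-1) (qconj a).

Definition qS : set (quat R) := [set J | q0 J = 0 /\ qnorm J = 1].
Definition qclass p : set (quat R) :=
  [set q | exists2 J, qS J & q = qadd (qreal (q0 p)) (qmul J (qreal (qnorm (qsub p (qreal (q0 p))))))].

Definition ebase (i : 'I_4) : quat R :=
  match val i with 0%N => q1H | 1%N => qe1 | 2%N => qe2 | _ => qe3 end.

Definition Qq (s p : quat R) : quat R :=
  qadd (qsub (qmul p p) (qmul (qreal (2 * q0 s)) p)) (qreal (qnorm s ^+ 2)).
Definition SLq (p s : quat R) : quat R := qmul (qsub p (qconj s)) (qinv (Qq s p)).
Definition SRq (s p : quat R) : quat R := qmul (qinv (Qq p s)) (qsub s (qconj p)).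
End Quat.
Arguments qreal {R} r.
Arguments q1H {R}.
Arguments qe1 {R}.
Arguments qe2 {R}.
Arguments qe3 {R}.
Arguments ebase {R} i.
Arguments qS {R}.

Record two_sided_banach (R : realType) (V : completeNormedModType R)
    (lm : quat R -> V -> V) (rm : V -> quat R -> V) : Prop := {
  lmDl : forall a b v, lm (qadd a b) v = lm a v + lm b v;
  lmDr : forall a u v, lm a (u + v) = lm a u + lm a v;
  lmA  : forall a b v, lm (qmul a b) v = lm a (lm b v);
  lm_real : forall r v, lm (qreal r) v = r *: v;
  rmDl : forall a b v, rm v (qadd a b) = rm v a + rm v b;
  rmDr : forall a u v, rm (u + v) a = rm u a + rm v a;
  rmA  : forall a b v, rm v (qmul a b) = rm (rm v a) b;
  rm_real : forall r v, rm v (qreal r) = r *: v;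
  lmrm : forall a b v, rm (lm a v) b = lm a (rm v b);
  norm_lm : forall a v, `|lm a v| = qnorm a * `|v|;
  norm_rm : forall a v, `|rm v a| = qnorm a * `|v|
}.

Section Ops.
Variables (R : realType) (V : completeNormedModType R).
Variables (lm : quat R -> V -> V) (rm : V -> quat R -> V).

Definition two_sided_subspace (D : set V) : Prop :=
  D 0 /\ (forall u v, D u -> D v -> D (u + v)) /\
  (forall a v, D v -> D (lm a v)) /\ (forall a v, D v -> D (rm v a)).

(* two-sided linear operator with domain D (values outside D irrelevant) *)
Definition two_sided_linear (D : set V) (A : V -> V) : Prop :=
  (forall u v, D u -> D v -> A (u + v) = A u + A v) /\
  (forall a v, D v -> A (lm a v) = lm a (A v)) /\
  (forall a v, D v -> A (rm v a) = rm (A v) a).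

Definition opfull (A : 'I_4 -> V -> V) (v : V) : V := \sum_(i < 4) lm (ebase i) (A i v).
Definition opbar (A : 'I_4 -> V -> V) (v : V) : V :=
  \sum_(i < 4) lm (qconj (ebase i)) (A i v).
Definition conjcomp (A : 'I_4 -> V -> V) : 'I_4 -> V -> V :=
  fun i v => if i == ord0 then A i v else - A i v.

Definition domT2 (D : set V) (T : 'I_4 -> V -> V) : set V :=
  [set v | D v /\ D (opfull T v)].

(* T in KC(V), T given by domain D and components T_0..T_3 *)
Definition KC (D : set V) (T : 'I_4 -> V -> V) : Prop :=
  two_sided_subspace D /\
  (forall i, two_sided_linear D (T i)) /\
  closed [set x : V * V | D x.1 /\ x.2 = opfull T x.1] /\
  (forall j v, domT2 D T v -> D (T j v)) /\
  (forall i j v, domT2 D T v -> T i (T j v) = T j (T i v)).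

Definition Qcs (T : 'I_4 -> V -> V) (s : quat R) (v : V) : V :=
  lm (qmul s s) v - (lm s (T ord0 v)) *+ 2 + \sum_(i < 4) T i (T i v).

Definition rhoS (D : set V) (T : 'I_4 -> V -> V) : set (quat R) :=
  [set s | forall w, exists! v, domT2 D T v /\ Qcs T s v = w].

Definition Qinv (D : set V) (T : 'I_4 -> V -> V) (s : quat R) (w : V) : V :=
  xget 0 [set v | domT2 D T v /\ Qcs T s v = w].

Definition SLop (D : set V) (T A : 'I_4 -> V -> V) (s : quat R) (w : V) : V :=
  lm s (Qinv D T s w) - opbar A (Qinv D T s w).
(* S_R^{-1}(s,A) = s Q_{c,s}^{-1}(T) - sum_i A_i Q_{c,s}^{-1}(T) conj(e_i),
   with (B a)(v) := B (a v) *)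
Definition SRop (D : set V) (T A : 'I_4 -> V -> V) (s : quat R) (w : V) : V :=
  lm s (Qinv D T s w) - \sum_(i < 4) A i (Qinv D T s (lm (qconj (ebase i)) w)).
End Ops.

From HB Require Import structures.
From mathcomp Require Import all_boot all_order all_algebra.
From mathcomp Require Import all_classical all_reals all_analysis.
From mathcomp Require Import ring.
Import Order.TTheory GRing.Theory Num.Theory.
Set Implicit Arguments.
Unset Strict Implicit.
Unset Printing Implicit Defensive.

(* Put x := Q_{c,p}^{-1}(T) v, so that v = p^2 x - 2 p T_0 x + |T|^2 x.  The
   operator Q_{c,s}^{-1}(T) commutes with every T_i and with left
   multiplication by s, hence S_R^{-1}(s,A) x = Q_{c,s}^{-1}(T) (s x - \bar A x)
   for A = T or \bar T; since T_0 is the real part of both, the second and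
   third expressions are Q_{c,s}^{-1}(T) applied to (p + s) x - 2 T_0 x.  So is
   the first one: writing S_R^{-1}(s,p) x = Q_{c,s}^{-1}(T) Q_{c,s}(T) S_R^{-1}(s,p) x
   and expanding both Q's, it collapses by the scalar identities
     S_L^{-1}(p,s) + S_R^{-1}(s,p) = 0,   S_L^{-1}(p,s) p + s S_R^{-1}(s,p) = 1,
     S_L^{-1}(p,s) p^2 + s^2 S_R^{-1}(s,p) = p + s,
   valid as soon as s \notin [p].
   The delicate point is that Q_{c,s}^{-1}(T) commutes with T_i, which needs
   T_j T_k y in dom(T) for y in dom(T^2) with |T|^2 y in dom(T).  Commutation of
   the T_i makes T send z_a := sum_k \bar e_k a T_k y to a |T|^2 y, so z_a lies
   in dom(T^2) and T_j z_a = sum_k \bar e_k a T_j T_k y lies in dom(T) for every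
   quaternion a; the relations sum_l e_l \bar e_k e_m \bar e_l = 4 delta_km then
   isolate each T_j T_k y. *)

Local Open Scope ring_scope.

Section QuatAlgebra.
Variable R : realType.
Implicit Types a b s p : quat R.

Lemma quat_ext a b :
  q0 a = q0 b -> q1 a = q1 b -> q2 a = q2 b -> q3 a = q3 b -> a = b.
Proof. by case: a => ????; case: b => ???? /= -> -> -> ->. Qed.

Lemma qmulA a b c : qmul a (qmul b c) = qmul (qmul a b) c.
Proof. by apply: quat_ext => /=; ring. Qed.

Definition qnormsq a := q0 a ^+ 2 + q1 a ^+ 2 + q2 a ^+ 2 + q3 a ^+ 2.
Definition qimsq a := q1 a ^+ 2 + q2 a ^+ 2 + q3 a ^+ 2.

Lemma qnormsq_ge0 a : 0 <= qnormsq a.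
Proof. by rewrite /qnormsq !addr_ge0 // sqr_ge0. Qed.

Lemma qnorm_sq a : qnorm a ^+ 2 = qnormsq a.
Proof. by rewrite sqr_sqrtr // qnormsq_ge0. Qed.

Lemma qnormsq_eq0 a : qnormsq a = 0 -> [/\ q0 a = 0, q1 a = 0, q2 a = 0 & q3 a = 0].
Proof.
move/eqP; rewrite /qnormsq !paddr_eq0 ?addr_ge0 ?sqr_ge0 // !sqrf_eq0.
by case/andP => /andP [/andP [/eqP ? /eqP ?] /eqP ?] /eqP.
Qed.

Lemma Qq_eq0 s p : qnormsq (Qq p s) = 0 -> q0 s = q0 p /\ qimsq s = qimsq p.
Proof.
rewrite /Qq qnorm_sq; case: s => s0 s1 s2 s3; case: p => p0 p1 p2 p3.
case/qnormsq_eq0 => /= c0 c1 c2 c3; rewrite /qimsq /qnormsq /= in c0 *.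
(* The imaginary part of [Qq p s] is [2 (s0 - p0)] times that of [s]. *)
have [e|ne] := eqVneq s0 p0.
  by split=> //; apply/eqP; rewrite eq_sym -subr_eq0 -c0 e; apply/eqP; ring.
have lcancel x : 2 * (s0 - p0) * x = 0 -> x = 0.
  by move/eqP; rewrite !mulf_eq0 pnatr_eq0 subr_eq0 (negbTE ne) => /eqP.
have z1 : s1 = 0 by apply: lcancel; rewrite -c1; ring.
have z2 : s2 = 0 by apply: lcancel; rewrite -c2; ring.
have z3 : s3 = 0 by apply: lcancel; rewrite -c3; ring.
have : qnormsq (Quat (s0 - p0) p1 p2 p3) = 0.
  by rewrite -c0 /qnormsq /= z1 z2 z3; ring.
by case/qnormsq_eq0 => /= /eqP; rewrite subr_eq0 (negbTE ne).
Qed.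

Lemma qclass_of s p : q0 s = q0 p -> qimsq s = qimsq p -> qclass p s.
Proof.
case: s => s0 s1 s2 s3; case: p => p0 p1 p2 p3; rewrite /qimsq /qclass /= => -> e.
set r := qnorm _.
have r2 : r ^+ 2 = s1 ^+ 2 + s2 ^+ 2 + s3 ^+ 2.
  by rewrite qnorm_sq /qnormsq /= e; ring.
have [r0|r_neq0] := eqVneq r 0.
  have : qnormsq (Quat 0 s1 s2 s3) = r ^+ 2 by rewrite r2 /qnormsq /=; ring.
  rewrite r0 expr0n /=; case/qnormsq_eq0 => /= _ s1_0 s2_0 s3_0.
  exists qe1; last by rewrite s1_0 s2_0 s3_0; apply: quat_ext => /=; ring.
  by split=> //; rewrite /qnorm /= expr0n expr1n /= !(add0r, addr0) sqrtr1.
exists (Quat 0 (s1 / r) (s2 / r) (s3 / r)); last first.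
  by apply: quat_ext => /=; field.
split=> //; rewrite /qnorm /=.
suff -> : 0 ^+ 2 + (s1 / r) ^+ 2 + (s2 / r) ^+ 2 + (s3 / r) ^+ 2 = 1 :> R by exact: sqrtr1.
by rewrite -[1](divff (expf_neq0 2 r_neq0)) {1}r2; field.
Qed.

Lemma qclass_of_Qq_eq0 s p : qnormsq (Qq p s) = 0 -> qclass p s.
Proof. by case/Qq_eq0; apply: qclass_of. Qed.

Lemma qclass_of_Qq_eq0C s p : qnormsq (Qq s p) = 0 -> qclass p s.
Proof. by case/Qq_eq0 => e0 e; apply: qclass_of. Qed.

Section CauchyKernelIdentities.
Variables s p : quat R.
Hypotheses (Hps : qnormsq (Qq p s) != 0) (Hsp : qnormsq (Qq s p) != 0).

(* The side conditions left by [field] are [Hps] and [Hsp] in expanded form. *)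
Ltac kernel_identity :=
  rewrite /SRq /SLq /qinv !qnorm_sq; move: Hps Hsp;
  rewrite /qnormsq /Qq !qnorm_sq /qnormsq;
  case: s => s0 s1 s2 s3; case: p => p0 p1 p2 p3 /= ? ?;
  apply: quat_ext => /=; field;
  match goal with h : is_true (_ != 0) |- _ =>
    apply: contra_neq h; refine (etrans _); ring end.

Lemma SLq_add_SRq : qadd (SLq p s) (SRq s p) = qreal 0.
Proof. kernel_identity. Qed.

Lemma SLq_mul_add_mul_SRq : qadd (qmul (SLq p s) p) (qmul s (SRq s p)) = q1H.
Proof. kernel_identity. Qed.

Lemma SLq_mulsq_add_mulsq_SRq :
  qadd (qmul (SLq p s) (qmul p p)) (qmul (qmul s s) (SRq s p)) = qadd p s.
Proof. kernel_identity. Qed.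
End CauchyKernelIdentities.
End QuatAlgebra.

Section TwoSidedModule.
Variables (R : realType) (V : completeNormedModType R).
Variables (lm : quat R -> V -> V) (rm : V -> quat R -> V).
Hypothesis HV : two_sided_banach lm rm.
Implicit Types (a s p : quat R) (u v w x y : V).

Lemma lm0 a : lm a 0 = 0.
Proof. by apply: (addrI (lm a 0)); rewrite -(lmDr HV) !addr0. Qed.

Lemma lmN a v : lm a (- v) = - lm a v.
Proof. by apply/eqP; rewrite -addr_eq0 -(lmDr HV) addNr lm0. Qed.

Lemma lmB a u v : lm a (u - v) = lm a u - lm a v.
Proof. by rewrite (lmDr HV) lmN. Qed.

Lemma lmMn a v n : lm a (v *+ n) = lm a v *+ n.
Proof. by elim: n => [|n IH]; rewrite ?lm0 // !mulrS (lmDr HV) IH. Qed.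

Lemma lm1 v : lm q1H v = v.
Proof. by rewrite (lm_real HV) scale1r. Qed.

Lemma lm_sum a (I : Type) (r : seq I) (P : pred I) (F : I -> V) :
  lm a (\sum_(i <- r | P i) F i) = \sum_(i <- r | P i) lm a (F i).
Proof. by elim/big_rec2: _ => [|i u v _ <-]; rewrite ?lm0 ?(lmDr HV). Qed.

Lemma lm_ebase_pair (j k : 'I_4) v :
  lm (ebase j) (lm (qconj (ebase k)) v) + lm (ebase k) (lm (qconj (ebase j)) v)
  = if j == k then v *+ 2 else 0.
Proof.
rewrite -!(lmA HV) -(lmDl HV).
transitivity (lm (qreal (if j == k then 2 else 0)) v).
  congr lm; case: j k => [[|[|[|[|j]]]] hj] // [[|[|[|[|k]]]] hk] //;
  by rewrite /ebase /= -?val_eqE /=; apply: quat_ext => /=; ring.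
by rewrite (lm_real HV); case: eqP => _; rewrite ?scaler_nat ?scale0r.
Qed.

Lemma lm_ebase_orthogonality (k m : 'I_4) v :
  \sum_(l < 4) lm (ebase l) (lm (qconj (ebase k)) (lm (ebase m) (lm (qconj (ebase l)) v)))
  = if k == m then v *+ 4 else 0.
Proof.
rewrite !big_ord_recl big_ord0 addr0 -!(lmA HV) -!(lmDl HV).
transitivity (lm (qreal (if k == m then 4 else 0)) v).
  congr lm; case: k m => [[|[|[|[|k]]]] hk] // [[|[|[|[|m]]]] hm] //;
  by rewrite /ebase /= -?val_eqE /=; apply: quat_ext => /=; ring.
by rewrite (lm_real HV); case: eqP => _; rewrite ?scaler_nat ?scale0r.
Qed.

End TwoSidedModule.

Section ClosedOperator.
Variables (R : realType) (V : completeNormedModType R).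
Variables (lm : quat R -> V -> V) (rm : V -> quat R -> V).
Hypothesis HV : two_sided_banach lm rm.
Variables (D : set V) (T : 'I_4 -> V -> V).
Hypothesis HT : KC lm rm D T.
Implicit Types (a s p : quat R) (u v w x y : V).

Local Notation dom2 := (domT2 lm D T).
Local Notation Tsq v := (\sum_(i < 4) T i (T i v)).

Lemma dom0 : D 0.
Proof. by case: HT => [[D0 _] _]. Qed.

Lemma domD {u v} : D u -> D v -> D (u + v).
Proof. by case: HT => [[_ [DD _]] _]; apply: DD. Qed.

Lemma dom_lm a {v} : D v -> D (lm a v).
Proof. by case: HT => [[_ [_ [Dlm _]]] _]; apply: Dlm. Qed.

Lemma domN {v} : D v -> D (- v).
Proof. by rewrite -scaleN1r -(lm_real HV); apply: dom_lm. Qed.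

Lemma domB {u v} : D u -> D v -> D (u - v).
Proof. by move=> Du /domN; apply: domD. Qed.

Lemma domMn n {v} : D v -> D (v *+ n).
Proof. by move=> Dv; elim: n => [|n IH]; [exact: dom0 | rewrite mulrS; apply: domD]. Qed.

Lemma dom_sum {I : Type} {r : seq I} {P : pred I} {F : I -> V} :
  (forall i, P i -> D (F i)) -> D (\sum_(i <- r | P i) F i).
Proof.
move=> DF; elim/big_rec: _ => [|i v Pi Dv]; first exact: dom0.
by apply: domD => //; apply: DF.
Qed.

Lemma TD i {u v} : D u -> D v -> T i (u + v) = T i u + T i v.
Proof. by case: HT => _ [/(_ i) [TD _] _]; apply: TD. Qed.

Lemma T_lm i a v : D v -> T i (lm a v) = lm a (T i v).
Proof. by case: HT => _ [/(_ i) [_ [Tlm _]] _]; apply: Tlm. Qed.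

Lemma T0 i : T i 0 = 0.
Proof. by apply: (addrI (T i 0)); rewrite -(TD i dom0 dom0) !addr0. Qed.

Lemma TN i v : D v -> T i (- v) = - T i v.
Proof. by move=> Dv; apply/eqP; rewrite -addr_eq0 -(TD i (domN Dv) Dv) addNr T0. Qed.

Lemma TB i u v : D u -> D v -> T i (u - v) = T i u - T i v.
Proof. by move=> Du Dv; rewrite (TD i Du (domN Dv)) TN. Qed.

Lemma TMn i v n : D v -> T i (v *+ n) = T i v *+ n.
Proof. by move=> Dv; elim: n => [|n IH]; rewrite ?T0 // !mulrS (TD i Dv (domMn n Dv)) IH. Qed.

Lemma T_sum i {I : Type} {r : seq I} {P : pred I} {F : I -> V} :
  (forall j, P j -> D (F j)) -> T i (\sum_(j <- r | P j) F j) = \sum_(j <- r | P j) T i (F j).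
Proof.
move=> DF; elim: r => [|j r IH]; rewrite ?big_nil ?T0 // !big_cons.
by case: ifP => // Pj; rewrite (TD i (DF j Pj) (dom_sum DF)) IH.
Qed.

Lemma domT2_dom v : dom2 v -> D v.
Proof. by case. Qed.

Lemma domT2_T j v : dom2 v -> D (T j v).
Proof. by case: HT => _ [_ [_ [Tdom _]]]; apply: Tdom. Qed.

Lemma T_comm i j v : dom2 v -> T i (T j v) = T j (T i v).
Proof. by case: HT => _ [_ [_ [_ Tcomm]]]; apply: Tcomm. Qed.

Lemma domT2_lm a v : dom2 v -> dom2 (lm a v).
Proof.
move=> v2; split; first by apply/dom_lm/domT2_dom.
apply: dom_sum => i _; rewrite (T_lm _ _ (domT2_dom v2)).
by apply/dom_lm/dom_lm/domT2_T.
Qed.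

Lemma domT2D u v : dom2 u -> dom2 v -> dom2 (u + v).
Proof.
move=> u2 v2; split; first by apply: domD; apply: domT2_dom.
apply: dom_sum => i _; rewrite (TD _ (domT2_dom u2) (domT2_dom v2)) (lmDr HV).
by apply: domD; apply/dom_lm/domT2_T.
Qed.

Lemma Tsq_lm a x : dom2 x -> Tsq (lm a x) = lm a (Tsq x).
Proof.
move=> x2; rewrite (lm_sum HV); apply: eq_bigr => i _.
by rewrite (T_lm _ _ (domT2_dom x2)) (T_lm _ _ (domT2_T _ x2)).
Qed.

Lemma Qcs_lmE s a x : dom2 x ->
  Qcs lm T s (lm a x)
  = lm (qmul (qmul s s) a) x - lm (qmul s a) (T ord0 x) *+ 2 + lm a (Tsq x).
Proof.
by move=> x2; rewrite /Qcs Tsq_lm // (T_lm _ _ (domT2_dom x2)) -!(lmA HV).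
Qed.

Lemma lm_QcsE a s x :
  lm a (Qcs lm T s x)
  = lm (qmul a (qmul s s)) x - lm (qmul a s) (T ord0 x) *+ 2 + lm a (Tsq x).
Proof. by rewrite /Qcs (lmDr HV) (lmB HV) (lmMn HV) -!(lmA HV). Qed.

Lemma Qcs_lm s a x : qmul s a = qmul a s -> dom2 x ->
  Qcs lm T s (lm a x) = lm a (Qcs lm T s x).
Proof.
move=> sa x2; rewrite Qcs_lmE // lm_QcsE sa.
by rewrite -qmulA sa qmulA sa -qmulA.
Qed.

Lemma QcsD s u v : dom2 u -> dom2 v ->
  Qcs lm T s (u + v) = Qcs lm T s u + Qcs lm T s v.
Proof.
move=> u2 v2; have Du := domT2_dom u2; have Dv := domT2_dom v2; rewrite /Qcs.
have -> : Tsq (u + v) = Tsq u + Tsq v.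
  rewrite -big_split; apply: eq_bigr => i _.
  by rewrite (TD _ Du Dv) (TD _ (domT2_T _ u2) (domT2_T _ v2)).
rewrite (TD _ Du Dv) !(lmDr HV) mulrnDl opprD.
by rewrite [X in X + _ = _]addrACA [LHS]addrACA.
Qed.

Lemma opbar_add_conjcomp x : opbar lm T x + opbar lm (conjcomp T) x = T ord0 x *+ 2.
Proof.
rewrite /opbar -big_split (bigD1 ord0) //= big1 ?addr0 => [|i /negbTE i_neq0].
  have -> : qconj (ebase ord0) = qreal 1 :> quat R by apply: quat_ext => /=; rewrite ?oppr0.
  by rewrite /conjcomp eqxx (lm_real HV) scale1r mulr2n.
by rewrite /conjcomp i_neq0 (lmN HV) addrN.
Qed.

Lemma conjcomp_lm i a w : D w -> conjcomp T i (lm a w) = lm a (conjcomp T i w).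
Proof. by move=> Dw; rewrite /conjcomp (T_lm _ _ Dw); case: ifP => // _; rewrite (lmN HV). Qed.

Lemma dom_ebase_coef (X : 'I_4 -> V) :
  (forall a, D (\sum_(k < 4) lm (qconj (ebase k)) (lm a (X k)))) -> forall m, D (X m).
Proof.
move=> DX m.
have D4X : D (X m *+ 4).
  suff <- : \sum_(l < 4) lm (ebase l)
      (\sum_(k < 4) lm (qconj (ebase k)) (lm (qmul (ebase m) (qconj (ebase l))) (X k)))
      = X m *+ 4 by apply: dom_sum => l _; apply: dom_lm.
  transitivity (\sum_(k < 4) \sum_(l < 4)
      lm (ebase l) (lm (qconj (ebase k)) (lm (ebase m) (lm (qconj (ebase l)) (X k))))).
    rewrite exchange_big; apply: eq_bigr => l _; rewrite (lm_sum HV).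
    by apply: eq_bigr => k _; rewrite (lmA HV).
  rewrite (bigD1 m) //= (lm_ebase_orthogonality HV) eqxx big1 ?addr0 // => k /negbTE km.
  by rewrite (lm_ebase_orthogonality HV) km.
have -> : X m = lm (qreal 4^-1) (X m *+ 4).
  by rewrite (lm_real HV) -[X m *+ 4]scaler_nat scalerA mulVf ?scale1r // pnatr_eq0.
exact: dom_lm.
Qed.

Lemma opfull_ebase_conj_sum a y : dom2 y ->
  opfull lm T (\sum_(k < 4) lm (qconj (ebase k)) (lm a (T k y))) = lm a (Tsq y).
Proof.
move=> y2; have DT k : D (T k y) := domT2_T k y2.
have DaT k : D (lm (qconj (ebase k)) (lm a (T k y))) by apply/dom_lm/dom_lm.
pose W i k := lm a (T i (T k y)).
transitivity (\sum_(i < 4) \sum_(k < 4) lm (ebase i) (lm (qconj (ebase k)) (W i k))).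
  apply: eq_bigr => i _; rewrite (T_sum _ (fun k _ => DaT k)) (lm_sum HV).
  by apply: eq_bigr => k _; rewrite (T_lm _ _ (dom_lm _ (DT k))) (T_lm _ _ (DT k)).
have two_neq0 : (2%:R : R) != 0 by rewrite pnatr_eq0.
apply: (scalerI two_neq0); rewrite !scaler_nat mulr2n [X in _ + X]exchange_big.
rewrite -big_split (lm_sum HV) -sumrMnl; apply: eq_bigr => i _ /=.
transitivity (\sum_(k < 4) if i == k then W i k *+ 2 else 0).
  rewrite -big_split /=; apply: eq_bigr => k _.
  by rewrite /W (T_comm k i y2) (lm_ebase_pair HV).
by rewrite (bigD1 i) //= eqxx big1 ?addr0 // => k; rewrite eq_sym => /negbTE ->.
Qed.

Lemma dom_TT y : dom2 y -> D (Tsq y) -> forall j k, D (T j (T k y)).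
Proof.
move=> y2 DTsq j; apply: dom_ebase_coef => a.
have DaT k : D (lm (qconj (ebase k)) (lm a (T k y))) by apply/dom_lm/dom_lm/domT2_T.
have z2 : dom2 (\sum_(k < 4) lm (qconj (ebase k)) (lm a (T k y))).
  split; first exact: dom_sum (fun k _ => DaT k).
  by rewrite opfull_ebase_conj_sum //; apply: dom_lm.
have := domT2_T j z2; rewrite (T_sum _ (fun k _ => DaT k)).
congr D; apply: eq_bigr => k _.
by rewrite (T_lm _ _ (dom_lm _ (domT2_T k y2))) (T_lm _ _ (domT2_T k y2)).
Qed.

Lemma T_domT2 j y : dom2 y -> (forall j k, D (T j (T k y))) -> dom2 (T j y).
Proof.
move=> y2 DTT; split; first exact: domT2_T.
by apply: dom_sum => k _; apply/dom_lm/DTT.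
Qed.

Lemma T_Qcs s i y : dom2 y -> (forall j k, D (T j (T k y))) ->
  Qcs lm T s (T i y) = T i (Qcs lm T s y).
Proof.
move=> y2 DTT; have Dy := domT2_dom y2.
have DTsq : D (Tsq y) by apply: dom_sum => j _; apply: DTT.
have DL : D (lm (qmul s s) y) := dom_lm _ Dy.
have DM : D (lm s (T ord0 y)) := dom_lm _ (domT2_T _ y2).
rewrite /Qcs (TD _ (domB DL (domMn 2 DM)) DTsq) (TB _ DL (domMn 2 DM)) (TMn _ _ DM).
rewrite (T_lm _ _ Dy) (T_lm _ _ (domT2_T _ y2)) (T_sum _ (fun j _ => DTT j j)).
rewrite (T_comm i ord0 y2); congr (_ + _); apply: eq_bigr => j _.
by rewrite -(T_comm j i (T_domT2 j y2 DTT)) (T_comm i j y2).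
Qed.

Section Resolvent.
Variable s : quat R.
Hypothesis Hs : rhoS lm D T s.
Local Notation Q := (Qinv lm D T s).

Lemma QinvP w : dom2 (Q w) /\ Qcs lm T s (Q w) = w.
Proof.
have [v [Pv _]] := Hs w.
exact: (@xgetI V 0 [set v | dom2 v /\ Qcs lm T s v = w] v Pv).
Qed.

Lemma QinvK u : dom2 u -> Q (Qcs lm T s u) = u.
Proof.
move=> u2; have [v [Pv Puniq]] := Hs (Qcs lm T s u).
by apply: xget_unique => // y Py; rewrite -(Puniq _ Py); apply: Puniq.
Qed.

Lemma QinvD u w : Q (u + w) = Q u + Q w.
Proof.
have [u2 Qu] := QinvP u; have [w2 Qw] := QinvP w.
by rewrite -(QinvK (domT2D u2 w2)) QcsD // Qu Qw.
Qed.

Lemma Qinv0 : Q 0 = 0.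
Proof. by apply: (addrI (Q 0)); rewrite -QinvD !addr0. Qed.

Lemma QinvN u : Q (- u) = - Q u.
Proof. by apply/eqP; rewrite -addr_eq0 -QinvD addNr Qinv0. Qed.

Lemma QinvB u w : Q (u - w) = Q u - Q w.
Proof. by rewrite QinvD QinvN. Qed.

Lemma Qinv_sum (I : Type) (r : seq I) (P : pred I) (F : I -> V) :
  Q (\sum_(i <- r | P i) F i) = \sum_(i <- r | P i) Q (F i).
Proof. by elim/big_rec2: _ => [|i u v _ <-]; rewrite ?Qinv0 ?QinvD. Qed.

Lemma Qinv_lm a w : qmul s a = qmul a s -> Q (lm a w) = lm a (Q w).
Proof.
move=> sa; have [w2 Qw] := QinvP w.
by rewrite -{1}Qw -Qcs_lm // QinvK //; apply: domT2_lm.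
Qed.

Lemma Qinv_T i w : dom2 w -> Q (T i w) = T i (Q w).
Proof.
move=> w2; have [y2 Qy] := QinvP w; set y := Q w in y2 Qy *.
have DTsq : D (Tsq y).
  have -> : Tsq y = w - (lm (qmul s s) y - lm s (T ord0 y) *+ 2).
    by rewrite -Qy /Qcs [_ - _ + _]addrC addrK.
  apply: domB (domT2_dom w2) (domB (dom_lm _ (domT2_dom y2)) (domMn 2 _)).
  exact/dom_lm/domT2_T.
have DTT := dom_TT y2 DTsq.
by rewrite -{1}Qy -(T_Qcs _ _ y2 DTT) QinvK //; apply: T_domT2.
Qed.

Lemma Qinv_conjcomp i w : dom2 w -> Q (conjcomp T i w) = conjcomp T i (Q w).
Proof. by move=> w2; rewrite /conjcomp; case: ifP => _; rewrite ?QinvN Qinv_T. Qed.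

Lemma SRop_Qinv (A : 'I_4 -> V -> V) :
  (forall i w, dom2 w -> Q (A i w) = A i (Q w)) ->
  (forall i a w, D w -> A i (lm a w) = lm a (A i w)) ->
  forall x, dom2 x -> SRop lm D T A s x = Q (lm s x - opbar lm A x).
Proof.
move=> QA Alm x x2; rewrite /SRop /opbar QinvB Qinv_lm // Qinv_sum.
congr (_ - _); apply: eq_bigr => i _.
by rewrite -(Alm _ _ _ (domT2_dom x2)) (QA _ _ (domT2_lm _ x2)).
Qed.

End Resolvent.

Section ResolventEquation.
Variables s p : quat R.
Hypotheses (Hs : rhoS lm D T s) (Hp : rhoS lm D T p).
Local Notation Qs := (Qinv lm D T s).
Local Notation Qp := (Qinv lm D T p).

Lemma Qinv_SLq_add_SRq v :
  qnormsq (Qq p s) != 0 -> qnormsq (Qq s p) != 0 ->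
  Qs (lm (SLq p s) v) + lm (SRq s p) (Qp v)
  = Qs (lm (qadd p s) (Qp v) - T ord0 (Qp v) *+ 2).
Proof.
move=> Hps Hsp; have [x2 Qx] := QinvP Hp v; set x := Qp v in x2 Qx *.
rewrite -{1}Qx -[lm (SRq s p) x](QinvK Hs (domT2_lm _ x2)) -(QinvD Hs); congr (Qs _).
rewrite lm_QcsE Qcs_lmE // [LHS]addrACA [X in X + _ = _]addrACA -opprD -mulrnDl.
rewrite -!(lmDl HV) (SLq_mulsq_add_mulsq_SRq Hps Hsp) (SLq_mul_add_mul_SRq Hps Hsp).
by rewrite (SLq_add_SRq Hps Hsp) (lm1 HV) (lm_real HV) scale0r addr0.
Qed.

Lemma Qinv_SLop_add_SRop (A B : 'I_4 -> V -> V) :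
  (forall x, dom2 x -> SRop lm D T B s x = Qs (lm s x - opbar lm B x)) ->
  (forall x, opbar lm A x + opbar lm B x = T ord0 x *+ 2) ->
  forall v, Qs (SLop lm D T A p v) + SRop lm D T B s (Qp v)
            = Qs (lm (qadd p s) (Qp v) - T ord0 (Qp v) *+ 2).
Proof.
move=> SRB opbarAB v; have [x2 _] := QinvP Hp v.
by rewrite /SLop SRB // -(QinvD Hs) addrACA -opprD opbarAB (lmDl HV).
Qed.

End ResolventEquation.
End ClosedOperator.

Theorem lemma3p9 (R : realType) (V : completeNormedModType R)
    (lm : quat R -> V -> V) (rm : V -> quat R -> V)
    (HV : two_sided_banach lm rm)
    (D : set V) (T : 'I_4 -> V -> V) (HT : KC lm rm D T)
    (s p : quat R) (Hs : rhoS lm D T s) (Hp : rhoS lm D T p)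
    (Hsp : ~ qclass p s) :
  (forall v : V,
     Qinv lm D T s (lm (SLq p s) v) + lm (SRq s p) (Qinv lm D T p v)
     = Qinv lm D T s (SLop lm D T T p v)
       + SRop lm D T (conjcomp T) s (Qinv lm D T p v)) /\
  (forall v : V,
     Qinv lm D T s (SLop lm D T T p v)
       + SRop lm D T (conjcomp T) s (Qinv lm D T p v)
     = Qinv lm D T s (SLop lm D T (conjcomp T) p v)
       + SRop lm D T T s (Qinv lm D T p v)).
Proof.
have Qps_neq0 : qnormsq (Qq p s) != 0 by apply/eqP => /qclass_of_Qq_eq0.
have Qsp_neq0 : qnormsq (Qq s p) != 0 by apply/eqP => /qclass_of_Qq_eq0C.
have SRop_T := SRop_Qinv HV HT Hs (Qinv_T HV HT Hs) (T_lm HT).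
have SRop_conj := SRop_Qinv HV HT Hs (Qinv_conjcomp HV HT Hs) (conjcomp_lm HV HT).
have opbarTC := opbar_add_conjcomp HV T.
have opbarCT x : opbar lm (conjcomp T) x + opbar lm T x = T ord0 x *+ 2.
  by rewrite addrC opbarTC.
split=> v.
  rewrite (Qinv_SLq_add_SRq HV HT Hs Hp v Qps_neq0 Qsp_neq0).
  by rewrite (Qinv_SLop_add_SRop HV HT Hs Hp SRop_conj opbarTC).
rewrite (Qinv_SLop_add_SRop HV HT Hs Hp SRop_conj opbarTC).
by rewrite (Qinv_SLop_add_SRop HV HT Hs Hp SRop_T opbarCT).
Qed.
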